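(* Let $A_3^*$ be the set of nonnegative integers whose base-$3$ expansion contains no digit $2$, and let $G_3^*$ be the set of positive integers $k$ such that $v_p(k) \in A_3^*$ for every prime $p$ dividing $k$. Then the upper uniform density of $G_3^*$ equals its asymptotic density: $\overline{u}(G_3^* ) = d(G_3^* )$.
   Context: $G_3^*$ is (by Rankin's characterization) the greedy set of positive integers free of 3-term geometric progressions. For $A\subseteq\mathbb{N}$: the asymptotic density is $d(A)=\lim_{N\to\infty}\frac{|A\cap\{1,\dots,N\}|}{N}$ when it exists (for $G_3^*$ it exists and equals $\prod_p (1-\frac1p)\sum_{i\in A_3^*} p^{-i}$); the upper uniform density is $\overline{u}(A) = \lim_{s\to\infty} \max_{n\ge 0} \frac{1}{s}\,\#\{a\in A : n < a \le n+s\}$. *)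

From HB Require Import structures.
From mathcomp Require Import all_boot all_order all_algebra.
From mathcomp Require Import all_classical all_reals all_analysis.
Set Implicit Arguments. Unset Strict Implicit. Unset Printing Implicit Defensive.
Import Order.TTheory GRing.Theory Num.Theory.
Local Open Scope classical_set_scope.
Local Open Scope ring_scope.

Definition A3star : set nat :=
  [set n | forall k : nat, ((n %/ 3 ^ k) %% 3 != 2)%N].

Definition G3star : set nat :=
  [set k | (0 < k)%N /\ forall p : nat, prime p -> (p %| k)%N -> A3star (logn p k)].

Definition window_count (R : realType) (A : set nat) (m s : nat) : R :=
  \sum_(m.+1 <= a < (m + s).+1) ((a \in A : bool)%:R : R).

Definition density_seq (R : realType) (A : set nat) (N : nat) : R :=
  window_count R A 0 N / N%:R.

Definition uniform_seq (R : realType) (A : set nat) (s : nat) : R :=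
  sup [set window_count R A m s / s%:R | m in [set: nat]].

From HB Require Import structures.
From mathcomp Require Import all_boot all_order all_algebra.
From mathcomp Require Import all_classical all_reals all_analysis.
From mathcomp Require Import ring lra zify.
Import Order.TTheory GRing.Theory Num.Theory.
Import numFieldTopology.Exports numFieldNormedType.Exports.
Local Open Scope classical_set_scope.

(** For a bound [y] and an exponent [E], let [H] be the set of [k] such that
   every prime [p <= y] has [v_p(k)] in [A3star] or [p^E %| k].  Membership in
   [H] depends only on [k] modulo [(y`!)^E], so every window of length [s]
   contains [s * c + O((y`!)^E)] elements of [H], with [c] independent of the
   window.  Now [G3star] is contained in [H], and [H] minus [G3star] consists
   of multiples of [p^E] with [p <= y] (relative density at most
   [(y+1)/2^E]) and of multiples of [n^2] with [n > y] (relative density at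
   most [1/y]).  So initial windows of [G3star] are nearly as full as the
   fullest windows of the same length; with [E = 2y] and [y] growing, this
   squeezes the density and the upper uniform density to a common limit. *)

Definition window_countn (A : set nat) (m s : nat) : nat :=
  \sum_(m.+1 <= a < (m + s).+1) nat_of_bool (a \in A).

Lemma window_count_natr (R : realType) A m s :
  window_count R A m s = (window_countn A m s)%:R%R.
Proof. by rewrite /window_count natr_sum. Qed.

Lemma window_countnD A m s t :
  window_countn A m (s + t) = window_countn A m s + window_countn A (m + s) t.
Proof.
by rewrite /window_countn addnA (big_cat_nat _ (n := (m + s).+1)) //; rewrite ltnS leq_addr.
Qed.

Lemma window_countn1 A m : window_countn A m 1 = nat_of_bool (m.+1 \in A).
Proof. by rewrite /window_countn addn1 big_nat1. Qed.

Lemma window_countn_le A m s : window_countn A m s <= s.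
Proof.
apply: (@leq_trans (\sum_(m.+1 <= a < (m + s).+1) 1)).
  by apply: leq_sum => a _; exact: leq_b1.
by rewrite sum_nat_const_nat subSS addKn muln1.
Qed.

Lemma window_countn_dvdn d N :
  0 < d -> window_countn [set k | d %| k] 0 N = N %/ d.
Proof.
move=> d_gt0; elim: N => [|N IHN]; first by rewrite /window_countn big_geq ?div0n.
rewrite -addn1 window_countnD IHN window_countn1 add0n addn1 divnS //.
rewrite addnC; congr (_ + _); case: (boolP (d %| N.+1)) => dN.
  by rewrite mem_set.
by rewrite memNset //; exact/negP.
Qed.

Lemma leq_window_countn (A B : set nat) m s :
  (forall k, m < k <= m + s -> A k -> B k) ->
  window_countn A m s <= window_countn B m s.
Proof.
move=> AB; rewrite /window_countn big_nat [leqRHS]big_nat.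
apply: leq_sum => k /AB; case: (boolP (k \in A)) => // /set_mem Ak /(_ Ak) Bk.
by rewrite (mem_set Bk).
Qed.

Lemma window_countnU (A B : set nat) m s :
  window_countn (A `|` B) m s <= window_countn A m s + window_countn B m s.
Proof.
rewrite /window_countn -big_split /=; apply: leq_sum => k _.
case: (boolP (k \in A `|` B)) => // /set_mem [Ak | Bk].
  by rewrite (mem_set Ak).
by rewrite (mem_set Bk) addn1.
Qed.

Lemma window_countn_bigcup (I : eqType) (r : seq I) (A : set nat)
    (B : I -> set nat) m s :
  (forall k, m < k <= m + s -> A k -> exists2 i, i \in r & B i k) ->
  window_countn A m s <= \sum_(i <- r) window_countn (B i) m s.
Proof.
move=> AB; rewrite /window_countn exchange_big /= big_nat [leqRHS]big_nat.
apply: leq_sum => k /AB; case: (boolP (k \in A)) => // /set_mem Ak /(_ Ak).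
move=> [i ir Bik]; rewrite (big_rem i ir) /= (mem_set Bik).
by apply: leq_trans (leq_addr _ _).
Qed.

Section PeriodicSet.
Context {H : set nat} {M : nat}.
Hypothesis M_gt0 : 0 < M.
Hypothesis H_periodic : forall k, (k + M \in H) = (k \in H).

Lemma window_countn_period m : window_countn H m M = window_countn H 0 M.
Proof.
elim: m => // m IHm.
have := congr1 (window_countn H m) (addnC M 1).
rewrite !window_countnD !window_countn1 -addSn H_periodic addn1; lia.
Qed.

Lemma window_countn_periods q m :
  window_countn H m (q * M) = q * window_countn H 0 M.
Proof.
elim: q m => [|q IHq] m; first by rewrite /window_countn addn0 big_geq.
by rewrite mulSn window_countnD IHq window_countn_period mulSn.
Qed.

Lemma window_countn_periodic_le m s :
  window_countn H m s * M <= s * window_countn H 0 M + M * M.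
Proof.
rewrite {1 2}(divn_eq s M) window_countnD window_countn_periods.
have := window_countn_le H (m + s %/ M * M) (s %% M).
have := ltn_pmod s M_gt0; nia.
Qed.

Lemma window_countn_periodic_ge m s :
  s * window_countn H 0 M <= window_countn H m s * M + M * M.
Proof.
rewrite {1 2}(divn_eq s M) window_countnD window_countn_periods.
have := window_countn_le H 0 M; have := ltn_pmod s M_gt0; nia.
Qed.

End PeriodicSet.

Lemma A3star_le1 n : n <= 1 -> A3star n.
Proof.
move=> n_le1 k; apply/eqP => digit2.
have := leq_trans (leq_mod _ 3) (leq_trans (leq_div n (3 ^ k)) n_le1).
by rewrite digit2.
Qed.

Definition G3approx (y E : nat) : set nat :=
  [set k | forall p, prime p -> p <= y -> p ^ E %| k \/ A3star (logn p k)].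

Definition small_prime_power_multiple (y E : nat) : set nat :=
  [set k | exists p, [/\ prime p, p <= y & p ^ E %| k]].

Definition large_square_multiple (y : nat) : set nat :=
  [set k | exists n, y < n /\ n ^ 2 %| k].

Definition G3approx_period (y E : nat) : nat := (y`!) ^ E.

Lemma G3approx_period_gt0 y E : 0 < G3approx_period y E.
Proof. by rewrite expn_gt0 fact_gt0. Qed.

Lemma G3star_sub_G3approx y E : G3star `<=` G3approx y E.
Proof.
move=> k [_ G3k] p p_pr _; right.
case: (boolP (p %| k)) => [pk | npk]; first exact: G3k.
by apply: A3star_le1; rewrite lognE (negbTE npk) !andbF.
Qed.

Lemma G3approx_cover y E :
  G3approx y E `&` [set k | 0 < k] `<=`
  G3star `|` small_prime_power_multiple y E `|` large_square_multiple y.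
Proof.
move=> k [approx_k k_gt0].
have [[p [p_pr notA]] | allA] :=
  pselect (exists p, prime p /\ ~ A3star (logn p k)); last first.
  left; left; split => // p p_pr _; apply: contrapT => notA.
  by apply: allA; exists p.
have logn_gt1 : 1 < logn p k by rewrite ltnNge; apply/negP => /A3star_le1.
have [p_le_y | y_lt_p] := leqP p y.
  by case: (approx_k p p_pr p_le_y) => // pE; left; right; exists p.
by right; exists p; rewrite pfactor_dvdn.
Qed.

Lemma logn_addr_pfactor p E k M : prime p -> p ^ E %| M -> ~~ (p ^ E %| k) ->
  logn p (k + M) = logn p k.
Proof.
move=> p_pr pE_M pE_k.
have k_gt0 : 0 < k by case: k pE_k; rewrite ?dvdn0.
have kM_gt0 : 0 < k + M by rewrite addn_gt0 k_gt0.
have lt_E : logn p k < E by rewrite ltnNge -pfactor_dvdn.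
have dvd_M e : e <= E -> p ^ e %| M by move=> ?; exact/(dvdn_trans _ pE_M)/dvdn_exp2l.
apply/eqP; rewrite eqn_leq; apply/andP; split.
  by rewrite leqNgt -pfactor_dvdn // dvdn_addl ?dvd_M // pfactor_dvdn // ltnn.
rewrite -pfactor_dvdn // dvdn_add ?dvd_M ?(ltnW lt_E) //.
by rewrite pfactor_dvdn.
Qed.

Lemma G3approx_periodic y E k :
  (k + G3approx_period y E \in G3approx y E) = (k \in G3approx y E).
Proof.
rewrite /G3approx_period; suff local p : prime p -> p <= y ->
    (p ^ E %| k + (y`!) ^ E \/ A3star (logn p (k + (y`!) ^ E))) <->
    (p ^ E %| k \/ A3star (logn p k)).
  apply/idP/idP => /set_mem approx_k; apply/mem_set => p p_pr p_le_y;
  by apply/(local p p_pr p_le_y)/approx_k.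
move=> p_pr p_le_y.
have pE_fact : p ^ E %| (y`!) ^ E by rewrite dvdn_exp2r // dvdn_fact ?prime_gt0.
rewrite dvdn_addl //; have [pE_k | npE_k] := boolP (p ^ E %| k); first by split; left.
by rewrite (logn_addr_pfactor _ E).
Qed.

Lemma window_countn_small_prime_power y E N :
  window_countn (small_prime_power_multiple y E) 0 N * 2 ^ E <= y.+1 * N.
Proof.
pose r := [seq p <- iota 0 y.+1 | prime p].
have cover : window_countn (small_prime_power_multiple y E) 0 N <=
    \sum_(p <- r) window_countn [set k | p ^ E %| k] 0 N.
  apply: window_countn_bigcup => k _ [p [p_pr p_le_y pE_k]].
  by exists p; rewrite // mem_filter p_pr mem_iota.
have multiples_le p : p \in r -> window_countn [set k | p ^ E %| k] 0 N * 2 ^ E <= N.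
  rewrite mem_filter => /andP[p_pr _].
  rewrite window_countn_dvdn ?expn_gt0 ?prime_gt0 //.
  apply: leq_trans (leq_divM N (p ^ E)); rewrite leq_mul2l.
  suff -> : 2 ^ E <= p ^ E by rewrite orbT.
  by case: E {cover} => [|E]; rewrite ?expn0 // leq_exp2r // prime_gt1.
apply: (@leq_trans ((\sum_(p <- r) window_countn [set k | p ^ E %| k] 0 N) * 2 ^ E)).
  by rewrite leq_mul2r cover orbT.
apply: (@leq_trans (\sum_(p <- r) N)).
  by rewrite big_distrl big_seq [leqRHS]big_seq; apply: leq_sum => p /multiples_le.
rewrite -[X in \sum_(_ <- _) X]mul1n -big_distrl sum1_size leq_mul2r size_filter.
by rewrite (leq_trans (count_size _ _)) ?size_iota ?orbT.
Qed.

Lemma window_countn_large_square y N :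
  window_countn (large_square_multiple y) 0 N <= \sum_(y <= j < N) N %/ j.+1 ^ 2.
Proof.
apply: (@leq_trans (\sum_(y <= j < N) window_countn [set k | j.+1 ^ 2 %| k] 0 N)).
  apply: window_countn_bigcup => k /andP[k_gt0 k_le_N] [n [y_lt_n n2_k]].
  have n_gt0 : 0 < n by apply: leq_ltn_trans y_lt_n.
  have n_le_k : n <= k.
    by apply: leq_trans (dvdn_leq k_gt0 n2_k); rewrite -{1}(expn1 n) leq_pexp2l.
  by exists n.-1; rewrite ?prednK // mem_index_iota; lia.
by apply/eq_leq/eq_bigr => j _; rewrite window_countn_dvdn // expn_gt0.
Qed.

Section RealBounds.
Variable R : realType.
Local Open Scope ring_scope.

Lemma sum_divn_sqr_le (y N : nat) : (0 < y)%N ->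
  ((\sum_(y <= j < N) N %/ j.+1 ^ 2)%:R : R) <= N%:R / y%:R.
Proof.
move=> y_gt0; have [N_le_y | y_lt_N] := leqP N y; first by rewrite big_geq // divr_ge0.
rewrite natr_sum.
apply: (@le_trans _ _ (\sum_(y <= j < N) N%:R * ((j%:R)^-1 - (j.+1%:R)^-1))).
  rewrite big_nat [X in _ <= X]big_nat; apply: ler_sum => j /andP[y_le_j _].
  have j_gt0 : (0 < j)%N by apply: leq_trans y_le_j.
  (* [1/(j+1)^2 <= 1/(j(j+1)) = 1/j - 1/(j+1)] telescopes to at most [1/y]. *)
  have -> : (j%:R)^-1 - (j.+1%:R)^-1 = ((j * j.+1)%:R)^-1 :> R.
    by rewrite natrM -addn1 natrD; field; rewrite natr1 !pnatr_eq0; lia.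
  rewrite ler_pdivlMr ?ltr0n ?muln_gt0 ?j_gt0 // -natrM ler_nat.
  have sq_ge : (j * j.+1 <= j.+1 ^ 2)%N by rewrite expnS expn1 leq_mul2r leqnSn orbT.
  apply: leq_trans (leq_divM N (j * j.+1)).
  by rewrite leq_mul2r leq_div2l ?orbT // muln_gt0 j_gt0.
have N_gt0 : (0 < N)%N by apply: leq_ltn_trans y_lt_N.
rewrite -big_distrr /=.
have -> : \sum_(y <= j < N) ((j%:R)^-1 - (j.+1%:R)^-1) = (y%:R)^-1 - (N%:R)^-1 :> R.
  rewrite -opprB -(telescope_sumr (fun k => (k%:R)^-1 : R) (ltnW y_lt_N)) -sumrN.
  by apply: eq_bigr => j _; rewrite opprB.
by rewrite mulrBr mulfV ?pnatr_eq0 -?lt0n // lerBlDr lerDl.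
Qed.

Lemma density_seq_le_uniform_seq (A : set nat) N :
  density_seq R A N <= uniform_seq R A N.
Proof.
apply: ub_le_sup; last by exists 0%N.
exists 1 => _ [m _ <-]; rewrite window_count_natr.
case: N => [|N]; first by rewrite invr0 mulr0.
by rewrite ler_pdivrMr ?ltr0n // mul1r ler_nat window_countn_le.
Qed.

Lemma cvgn_squeeze_approx (u v : nat -> R) :
  (forall e, 0 < e -> exists c,
     \forall n \near \oo, c - e <= u n /\ u n <= v n /\ v n <= c + e) ->
  cvgn u /\ v @ \oo --> limn u.
Proof.
move=> approx.
have cvg_u : cvgn u.
  apply/cauchy_cvgP/cauchy_exP => e e_gt0.
  have [c near_c] := approx (e / 2) (divr_gt0 e_gt0 (ltr0Sn _ _)).
  exists c; apply: filterS near_c => n [? [? ?]] /=.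
  rewrite /ball /= ltr_norml; apply/andP; split; lra.
split => //; apply/cvgrPdist_le => e e_gt0.
have [c near_c] := approx (e / 3) (divr_gt0 e_gt0 (ltr0Sn _ _)).
have lim_ge : c - e / 3 <= limn u by apply: limr_ge => //; apply: filterS near_c => n [].
have lim_le : limn u <= c + e / 3.
  by apply: limr_le => //; apply: filterS near_c => n [? [? ?]]; lra.
apply: filterS near_c => n [? [? ?]].
rewrite ler_norml; apply/andP; split; lra.
Qed.

Lemma near_infty_div_le (a : R) {e : R} : 0 < e -> \forall n \near \oo, a / n%:R <= e.
Proof.
move=> e_gt0; exists (Num.Def.archi_bound (`|a| / e)).+1 => // n /= n_gt.
have n_pos : 0 < n%:R :> R by rewrite ltr0n; apply: leq_trans n_gt.
rewrite ler_pdivrMr // mulrC; apply: le_trans (ler_norm a) _.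
rewrite -ler_pdivrMr //; apply/ltW/(lt_le_trans (archi_boundP _)).
  by rewrite divr_ge0 // ltW.
by rewrite ler_nat ltnW.
Qed.

Lemma ler_natr_div (a b c d : nat) : (0 < b)%N -> (0 < d)%N -> (a * d <= c * b)%N ->
  a%:R / b%:R <= c%:R / d%:R :> R.
Proof.
move=> b_gt0 d_gt0 ad_le; rewrite ler_pdivrMr ?ltr0n // mulrAC ler_pdivlMr ?ltr0n //.
by rewrite -!natrM ler_nat.
Qed.

Definition G3approx_density (y E : nat) : R :=
  (window_countn (G3approx y E) 0 (G3approx_period y E))%:R / (G3approx_period y E)%:R.

Lemma uniform_seq_le y E {s} : (0 < s)%N ->
  uniform_seq R G3star s <= G3approx_density y E + (G3approx_period y E)%:R / s%:R.
Proof.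
move=> s_gt0; apply: ge_sup; first by exists (window_count R G3star 0 s / s%:R), 0%N.
move=> _ [m _ <-]; rewrite window_count_natr /G3approx_density.
have P_gt0 := G3approx_period_gt0 y E.
set P := G3approx_period y E; set c := window_countn _ 0 P.
have count_le : (window_countn G3star m s * P <= s * c + P * P)%N.
  apply: leq_trans _ (window_countn_periodic_le P_gt0 (G3approx_periodic y E) m s).
  by rewrite leq_mul2r leq_window_countn ?orbT // => k _; apply: G3star_sub_G3approx.
have -> : c%:R / P%:R + P%:R / s%:R = (s * c + P * P)%:R / (s * P)%:R :> R.
  by rewrite natrD !natrM; field; rewrite !pnatr_eq0 -!lt0n P_gt0 s_gt0.
apply: ler_natr_div; rewrite ?muln_gt0 ?s_gt0 //.
by rewrite mulnCA [leqRHS]mulnC leq_mul2l count_le orbT.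
Qed.

Lemma density_seq_ge {y E N} : (0 < y)%N -> (0 < N)%N -> (y * y.+1 <= 2 ^ E)%N ->
  G3approx_density y E - (G3approx_period y E)%:R / N%:R - 2 / y%:R
    <= density_seq R G3star N.
Proof.
move=> y_gt0 N_gt0 yyE; rewrite /density_seq window_count_natr /G3approx_density.
have P_gt0 := G3approx_period_gt0 y E.
set P := G3approx_period y E; set c := window_countn _ 0 P.
set g := window_countn G3star 0 N.
set d1 := window_countn (small_prime_power_multiple y E) 0 N.
set d2 := window_countn (large_square_multiple y) 0 N.
have approx_le : (window_countn (G3approx y E) 0 N <= g + d1 + d2)%N.
  apply: leq_trans (leq_add (window_countnU _ _ _ _) (leqnn d2)).
  apply: leq_trans (window_countnU _ _ _ _); apply: leq_window_countn.
  by move=> k /andP[k_gt0 _] approx_k; apply: G3approx_cover.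
have approx_ge : c%:R / P%:R <= (g + d1 + d2 + P)%:R / N%:R :> R.
  apply: ler_natr_div => //; rewrite mulnC mulnDl.
  apply: leq_trans (window_countn_periodic_ge P_gt0 (G3approx_periodic y E) 0 N) _.
  by rewrite leq_add2r leq_mul2r approx_le orbT.
have d1_le : d1%:R / N%:R <= y%:R^-1 :> R.
  rewrite ler_pdivrMr ?ltr0n // mulrC ler_pdivlMr ?ltr0n // -natrM ler_nat.
  by have := window_countn_small_prime_power y E N; rewrite -/d1; nia.
have d2_le : d2%:R / N%:R <= y%:R^-1 :> R.
  rewrite ler_pdivrMr ?ltr0n // mulrC; apply: le_trans (sum_divn_sqr_le y N y_gt0).
  by rewrite ler_nat window_countn_large_square.
rewrite !natrD !mulrDl in approx_ge.
lra.
Qed.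

End RealBounds.

Lemma square_succ_le_exp2 y : y * y.+1 <= 2 ^ (y + y).
Proof.
have lt_y : y < 2 ^ y by rewrite ltn_expl.
by rewrite expnD leq_mul // ltnW.
Qed.

Local Open Scope ring_scope.

Theorem mainTheorem2 (R : realType) :
  cvgn (density_seq R G3star) /\
  uniform_seq R G3star @ \oo --> limn (density_seq R G3star).
Proof.
apply: cvgn_squeeze_approx => e e_gt0.
have e2_gt0 : 0 < e / 2 by rewrite divr_gt0.
have [Y _ near_Y] := near_infty_div_le R 2 e2_gt0.
pose y := Y.+1; have y_gt0 : (0 < y)%N by [].
have y_le : 2 / y%:R <= e / 2 by apply: near_Y => /=.
exists (G3approx_density R y (y + y)); near=> n.
have n_gt0 : (0 < n)%N by near: n; exists 1%N.
have P_le : (G3approx_period y (y + y))%:R / n%:R <= e / 2.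
  by near: n; exact: near_infty_div_le.
have := density_seq_ge R y_gt0 n_gt0 (square_succ_le_exp2 y).
have := uniform_seq_le R y (y + y) n_gt0.
have := density_seq_le_uniform_seq R G3star n.
lra.
Unshelve. all: by end_near.
Qed.
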